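(* Let $\mathcal{D}$ be an algebra and vector lattice of bounded real functions with the Stone property, and $(\mathcal{E},\mathcal{D})$ a bilinear form on which the unit contraction operates, with killing functional $K$. Then $K(f^2)\le\mathcal{E}(f)$ for all $f\in\mathcal{D}_0$, and $\mathcal{Q}(f,g):=\mathcal{E}(f,g)-K(fg)$, $f,g\in\mathcal{D}_0$, defines a bilinear form $(\mathcal{Q},\mathcal{D}_0)$ on which the unit contraction operates and which has zero killing.
   Context: Stone property: $f\wedge1\in\mathcal{D}$ for $f\in\mathcal{D}$. Unit contraction $T_1(x)=\max(x,0)\wedge1$; operates on $(\mathcal{E},\mathcal{D})$ if $\mathcal{E}(T_1(f))\le\mathcal{E}(f)$. Bilinear form: symmetric nonnegative definite bilinear map, $\mathcal{E}(f)=\mathcal{E}(f,f)$. For $f\ge0$ in $\mathcal{D}$, $E_f:=\{\varphi\in\mathcal{D}:\mathbf 1_{\{f>0\}}\le\varphi\le\mathbf 1\}$; $\mathcal{D}_0^+:=\{f\in\mathcal{D},f\ge0: E_f\ne\emptyset\}$, $\mathcal{D}_0$ its linear span (an ideal of $\mathcal{D}$, so $fg\in\mathcal{D}_0$ for $f,g\in\mathcal{D}_0$). Killing functional: $K(f):=\inf\{\mathcal{E}(f,\varphi):\varphi\in E_f\}$ for $f\in\mathcal{D}_0^+$, extended to $\mathcal{D}_0$ by $K(f)=K(f^+)-K(f^-)$. A form $(\mathcal{Q},\mathcal{D}_0)$ has zero killing if its killing functional (defined by the same recipe with $\mathcal{Q},\mathcal{D}_0$ in place of $\mathcal{E},\mathcal{D}$)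 vanishes identically. *)

From Stdlib Require Import Reals ClassicalEpsilon.
Open Scope R_scope.

Section Defs.
Context {X : Type}.
Notation fn := (X -> R).

Definition fadd (f g : fn) : fn := fun x => f x + g x.
Definition fscal (a : R) (f : fn) : fn := fun x => a * f x.
Definition fmul (f g : fn) : fn := fun x => f x * g x.
Definition fmax (f g : fn) : fn := fun x => Rmax (f x) (g x).
Definition fmin (f g : fn) : fn := fun x => Rmin (f x) (g x).
Definition fzero : fn := fun _ => 0.
Definition fone : fn := fun _ => 1.
Definition fpos (f : fn) : fn := fun x => Rmax (f x) 0.
Definition fneg (f : fn) : fn := fun x => Rmax (- f x) 0.
Definition T1 (t : R) : R := Rmin (Rmax t 0) 1.
Definition fT1 (f : fn) : fn := fun x => T1 (f x).

Definition bounded (f : fn) : Prop := exists M, forall x, Rabs (f x) <= M.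

Definition subspace (D : fn -> Prop) : Prop :=
  D fzero /\ (forall f g, D f -> D g -> D (fadd f g)) /\
  (forall a f, D f -> D (fscal a f)).

Definition stone_algebra_lattice (D : fn -> Prop) : Prop :=
  subspace D /\ (forall f, D f -> bounded f) /\
  (forall f g, D f -> D g -> D (fmul f g)) /\
  (forall f g, D f -> D g -> D (fmax f g)) /\
  (forall f g, D f -> D g -> D (fmin f g)) /\
  (forall f, D f -> D (fmin f fone)).

Definition bilinear_form (D : fn -> Prop) (E : fn -> fn -> R) : Prop :=
  subspace D /\
  (forall f g, D f -> D g -> E f g = E g f) /\
  (forall a b f g h, D f -> D g -> D h ->
       E (fadd (fscal a f) (fscal b g)) h = a * E f h + b * E g h) /\
  (forall f, D f -> 0 <= E f f).

Definition unit_contraction_operates (D : fn -> Prop) (E : fn -> fn -> R) : Prop :=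
  forall f, D f -> D (fT1 f) /\ E (fT1 f) (fT1 f) <= E f f.

Definition Eset (D : fn -> Prop) (f phi : fn) : Prop :=
  D phi /\ (forall x, 0 < f x -> 1 <= phi x) /\ (forall x, phi x <= 1) /\
  (forall x, 0 <= phi x).

Definition D0plus (D : fn -> Prop) (f : fn) : Prop :=
  D f /\ (forall x, 0 <= f x) /\ exists phi, Eset D f phi.

Inductive span (S : fn -> Prop) : fn -> Prop :=
| span_zero : span S fzero
| span_gen : forall f, S f -> span S f
| span_add : forall f g, span S f -> span S g -> span S (fadd f g)
| span_scal : forall a f, span S f -> span S (fscal a f).

Definition D0 (D : fn -> Prop) : fn -> Prop := span (D0plus D).

Definition is_glb (P : R -> Prop) (l : R) : Prop :=
  (forall r, P r -> l <= r) /\ (forall b, (forall r, P r -> b <= r) -> b <= l).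
Definition Rinf (P : R -> Prop) : R := epsilon (inhabits 0) (is_glb P).

Definition killing_plus (D : fn -> Prop) (E : fn -> fn -> R) (f : fn) : R :=
  Rinf (fun r => exists phi, Eset D f phi /\ r = E f phi).

Definition killing (D : fn -> Prop) (E : fn -> fn -> R) (f : fn) : R :=
  killing_plus D E (fpos f) - killing_plus D E (fneg f).

Definition zero_killing (D : fn -> Prop) (E : fn -> fn -> R) : Prop :=
  forall f, D0 D f -> killing D E f = 0.

End Defs.

From Pilot Require Import Defs.
From Stdlib Require Import Reals Lra ClassicalEpsilon FunctionalExtensionality Classical.
Open Scope R_scope.

(* The Markov property of [T_1], tested on [phi + t f] and on [e u - t h] as [t -> 0], gives
   [E(f, phi) >= 0] for [phi] in [E_f] and [E(u, h) <= 0] for disjointly supported [u, h >= 0].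
   Hence [E(f, .)] is antitone on [E_f], which makes [K] additive on [D_0^+] and so linear on
   [D_0]. Slicing [u >= 0] into layers of height [d] gives [E(u^2, chi) <= E(u) + d E(u, chi)]
   for every cutoff [chi] of [u], whence [K(f^2) <= E(f)] and [Q] is nonnegative. For [g] in
   [D_0^+] and [psi] in [E_g] we have [Q(g, psi) = E(g, psi) - K(g)], and truncating a
   near-optimal [phi] at a small height moves it into [D_0] at small cost, so the killing
   functional of [Q] vanishes. *)

Ltac destruct_minmax :=
  unfold T1, Rmax, Rmin in *;
  repeat match goal with
  | |- context [Rle_dec ?a ?b] => destruct (Rle_dec a b)
  | H : context [Rle_dec ?a ?b] |- _ => destruct (Rle_dec a b)
  end.

Lemma Rle_0_of_perturbation (a b : R) :
  (forall t, 0 < t -> 0 <= a + t * b) -> 0 <= a.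
Proof.
  intros H. destruct (Rle_lt_dec 0 a) as [Ha | Ha]; [exact Ha |].
  pose proof (Rabs_pos b) as Hb.
  set (t := - a / (2 * (Rabs b + 1))).
  assert (Ht : 0 < t) by (unfold t; apply Rdiv_lt_0_compat; lra).
  assert (Hta : t * Rabs b + t = - a / 2) by (unfold t; field; lra).
  assert (t * b <= t * Rabs b) by (apply Rmult_le_compat_l; [lra | apply RRle_abs]).
  specialize (H t Ht). lra.
Qed.

Lemma exists_scale_le_one {X : Type} (f : X -> R) : Defs.bounded f ->
  exists e, 0 < e /\ forall x, e * Rabs (f x) <= 1.
Proof.
  intros [M HM]. pose proof (Rabs_pos M) as HM0. pose proof (RRle_abs M).
  exists (/ (Rabs M + 1)). split; [apply Rinv_0_lt_compat; lra |].
  intros x. specialize (HM x).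
  apply (Rmult_le_reg_l (Rabs M + 1)); [lra |].
  rewrite <- Rmult_assoc, Rinv_r by lra. lra.
Qed.

Lemma is_glb_unique (P : R -> Prop) l1 l2 : is_glb P l1 -> is_glb P l2 -> l1 = l2.
Proof. intros [A1 B1] [A2 B2]. apply Rle_antisym; [apply B2 | apply B1]; assumption. Qed.

Lemma Rinf_eq (P : R -> Prop) l : is_glb P l -> Rinf P = l.
Proof.
  intros Hl. apply (is_glb_unique P); [| exact Hl].
  exact (epsilon_spec (inhabits 0) (is_glb P) (ex_intro _ l Hl)).
Qed.

Lemma is_glb_Rinf (P : R -> Prop) :
  (exists r, P r) -> (exists b, forall r, P r -> b <= r) -> is_glb P (Rinf P).
Proof.
  intros [r Hr] [b Hb].
  destruct (completeness (fun y => P (- y))) as [m [Hm1 Hm2]].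
  - exists (- b). intros y Hy. specialize (Hb _ Hy). lra.
  - exists (- r). rewrite Ropp_involutive. exact Hr.
  - assert (Hglb : is_glb P (- m)).
    { split.
      - intros s Hs. assert (- s <= m) by (apply Hm1; rewrite Ropp_involutive; exact Hs). lra.
      - intros c Hc. assert (m <= - c) by (apply Hm2; intros y Hy; specialize (Hc _ Hy); lra).
        lra. }
    rewrite (Rinf_eq P (- m) Hglb). exact Hglb.
Qed.

Lemma is_glb_approx (P : R -> Prop) l e : is_glb P l -> 0 < e ->
  exists r, P r /\ r <= l + e.
Proof.
  intros [_ Hgreatest] He. apply NNPP. intros Hnone.
  assert (l + e <= l); [| lra].
  apply Hgreatest. intros r Hr. destruct (Rle_lt_dec r (l + e)); [| lra].
  exfalso. apply Hnone. eauto.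
Qed.

Lemma is_glb_of_approx (P : R -> Prop) l :
  (forall r, P r -> l <= r) -> (forall e, 0 < e -> exists r, P r /\ r <= l + e) ->
  is_glb P l.
Proof.
  intros Hlow Happrox. split; [exact Hlow |].
  intros b Hb. apply Rle_plus_epsilon. intros e He.
  destruct (Happrox e He) as [r [Hr Hle]]. specialize (Hb r Hr). lra.
Qed.

Section KillingFunctional.
Context {X : Type} (D : (X -> R) -> Prop) (E : (X -> R) -> (X -> R) -> R).
Hypothesis hD : stone_algebra_lattice D.
Hypothesis hE : bilinear_form D E.
Hypothesis hT : unit_contraction_operates D E.

Ltac destruct_hD := destruct hD as [[? [? ?]] [? [? [? [? ?]]]]].

Lemma D_zero : D fzero. Proof. destruct_hD; auto. Qed.
Lemma D_add f g : D f -> D g -> D (fadd f g). Proof. destruct_hD; auto. Qed.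
Lemma D_scal a f : D f -> D (fscal a f). Proof. destruct_hD; auto. Qed.
Lemma D_mul f g : D f -> D g -> D (fmul f g). Proof. destruct_hD; auto. Qed.
Lemma D_max f g : D f -> D g -> D (fmax f g). Proof. destruct_hD; auto. Qed.
Lemma D_min1 f : D f -> D (fmin f fone). Proof. destruct_hD; auto. Qed.
Lemma D_bounded f : D f -> Defs.bounded f. Proof. destruct_hD; auto. Qed.

Lemma D_lin a f b g : D f -> D g -> D (fun x => a * f x + b * g x).
Proof. intros Df Dg. exact (D_add _ _ (D_scal a f Df) (D_scal b g Dg)). Qed.

Lemma D_sub f g : D f -> D g -> D (fun x => f x - g x).
Proof.
  intros Df Dg. replace (fun x => f x - g x) with (fun x => 1 * f x + (-1) * g x)
    by (extensionality x; ring).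
  apply D_lin; assumption.
Qed.

Lemma D_pos f : D f -> D (fpos f).
Proof. intros Df. exact (D_max f fzero Df D_zero). Qed.

Lemma D_neg f : D f -> D (fneg f).
Proof.
  intros Df. replace (fneg f) with (fmax (fscal (-1) f) fzero)
    by (extensionality x; unfold fmax, fscal, fzero, fneg; f_equal; ring).
  exact (D_max _ _ (D_scal _ _ Df) D_zero).
Qed.

Lemma D_min_const f c : D f -> 0 < c -> D (fun x => Rmin (f x) c).
Proof.
  intros Df Hc. replace (fun x => Rmin (f x) c) with (fscal c (fmin (fscal (/ c) f) fone)).
  { apply D_scal, D_min1, D_scal, Df. }
  extensionality x. unfold fscal, fmin, fone.
  generalize (f x) as z. intros z.
  replace z with (c * (/ c * z)) at 2 by (field; lra).
  generalize (/ c * z) as y. intros y. destruct_minmax; nra.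
Qed.

Lemma D_T1 f : D f -> D (fT1 f). Proof. intros Df. apply (hT f Df). Qed.
Lemma E_T1 f : D f -> E (fT1 f) (fT1 f) <= E f f. Proof. intros Df. apply (hT f Df). Qed.

Lemma E_sym f g : D f -> D g -> E f g = E g f.
Proof. destruct hE as [_ [H _]]; auto. Qed.

Lemma E_nonneg f : D f -> 0 <= E f f.
Proof. destruct hE as [_ [_ [_ H]]]; auto. Qed.

Lemma E_lin a f b g h : D f -> D g -> D h ->
  E (fun x => a * f x + b * g x) h = a * E f h + b * E g h.
Proof. destruct hE as [_ [_ [H _]]]; apply H. Qed.

Lemma E_lin_r a f b g h : D f -> D g -> D h ->
  E h (fun x => a * f x + b * g x) = a * E h f + b * E h g.
Proof.
  intros Df Dg Dh. rewrite E_sym, E_lin, (E_sym h f), (E_sym h g); auto using D_lin.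
Qed.

Lemma E_add f g h : D f -> D g -> D h -> E (fadd f g) h = E f h + E g h.
Proof.
  intros Df Dg Dh. replace (fadd f g) with (fun x => 1 * f x + 1 * g x)
    by (extensionality x; unfold fadd; ring).
  rewrite E_lin by assumption. ring.
Qed.

Lemma E_add_r f g h : D f -> D g -> D h -> E h (fadd f g) = E h f + E h g.
Proof.
  intros Df Dg Dh. rewrite E_sym, E_add, (E_sym h f), (E_sym h g); auto using D_add.
Qed.

Lemma E_scal a f h : D f -> D h -> E (fscal a f) h = a * E f h.
Proof.
  intros Df Dh. replace (fscal a f) with (fun x => a * f x + 0 * f x)
    by (extensionality x; unfold fscal; ring).
  rewrite E_lin by assumption. ring.
Qed.

Lemma E_scal_r a f h : D f -> D h -> E h (fscal a f) = a * E h f.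
Proof. intros Df Dh. rewrite E_sym, E_scal, (E_sym h f); auto using D_scal. Qed.

Lemma E_zero h : D h -> E fzero h = 0.
Proof.
  intros Dh. replace (@fzero X) with (fscal 0 (@fzero X))
    by (extensionality x; unfold fscal, fzero; ring).
  rewrite E_scal by auto using D_zero. ring.
Qed.

Lemma E_quad a f b g : D f -> D g ->
  E (fun x => a * f x + b * g x) (fun x => a * f x + b * g x)
  = a * a * E f f + 2 * a * b * E f g + b * b * E g g.
Proof.
  intros Df Dg. rewrite E_lin_r, !E_lin, (E_sym g f); auto using D_lin. ring.
Qed.

Lemma Eset_eq_one f phi x : Eset D f phi -> 0 < f x -> phi x = 1.
Proof. intros [_ [H1 [H2 _]]] Hx. specialize (H1 x Hx). specialize (H2 x). lra. Qed.

Lemma E_nonneg_on_Eset f phi : D f -> (forall x, 0 <= f x) -> Eset D f phi ->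
  0 <= E f phi.
Proof.
  intros Df Hf Hphi. pose proof Hphi as [Dphi [_ [Hle1 Hge0]]].
  apply (Rle_0_of_perturbation _ (E f f / 2)). intros t Ht.
  assert (Hfix : fT1 (fun x => 1 * phi x + t * f x) = phi).
  { extensionality x. unfold fT1. specialize (Hle1 x). specialize (Hge0 x).
    destruct (Rlt_dec 0 (f x)) as [Hpos | Hzero].
    - rewrite (Eset_eq_one f phi x Hphi Hpos).
      assert (0 < t * f x) by (apply Rmult_lt_0_compat; assumption). destruct_minmax; lra.
    - replace (f x) with 0 by (specialize (Hf x); lra). destruct_minmax; lra. }
  pose proof (E_T1 _ (D_lin 1 phi t f Dphi Df)) as HT.
  rewrite Hfix, E_quad, (E_sym phi f) in HT by assumption. nra.
Qed.

Lemma E_disjoint_nonpos u h : D u -> D h -> (forall x, 0 <= u x) -> (forall x, 0 <= h x) ->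
  (forall x, u x = 0 \/ h x = 0) -> E u h <= 0.
Proof.
  intros Du Dh Hu Hh Hdisj.
  destruct (exists_scale_le_one u (D_bounded u Du)) as [e [He Hbound]].
  cut (0 <= - 2 * e * E u h); [nra |].
  apply (Rle_0_of_perturbation _ (E h h)). intros t Ht.
  assert (Hfix : fT1 (fun x => e * u x + (- t) * h x) = (fun x => e * u x + 0 * h x)).
  { extensionality x. unfold fT1. specialize (Hbound x). specialize (Hu x). specialize (Hh x).
    rewrite Rabs_right in Hbound by lra.
    assert (0 <= e * u x) by (apply Rmult_le_pos; lra).
    destruct (Hdisj x) as [Hz | Hz]; rewrite Hz.
    - assert (0 <= t * h x) by (apply Rmult_le_pos; lra). destruct_minmax; lra.
    - destruct_minmax; lra. }
  pose proof (E_T1 _ (D_lin e u (- t) h Du Dh)) as HT.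
  rewrite Hfix, !E_quad in HT by assumption. nra.
Qed.

Lemma E_antitone_on_Eset h phi psi : D h -> (forall x, 0 <= h x) ->
  Eset D h phi -> Eset D h psi -> (forall x, psi x <= phi x) -> E h phi <= E h psi.
Proof.
  intros Dh Hh Hphi Hpsi Hle. pose proof Hphi as [Dphi _]. pose proof Hpsi as [Dpsi _].
  assert (Hdiff : E (fun x => 1 * phi x + (-1) * psi x) h <= 0).
  { apply E_disjoint_nonpos; auto using D_lin.
    - intros x. specialize (Hle x). lra.
    - intros x. destruct (Rlt_dec 0 (h x)) as [Hpos | Hzero].
      + left. rewrite (Eset_eq_one h phi x Hphi Hpos), (Eset_eq_one h psi x Hpsi Hpos). ring.
      + right. specialize (Hh x). lra. }
  rewrite E_lin, (E_sym phi h), (E_sym psi h) in Hdiff by assumption. lra.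
Qed.

Definition cutoff (h chi : X -> R) : Prop :=
  D chi /\ (forall x, h x <> 0 -> chi x = 1) /\ (forall x, 0 <= chi x <= 1).

Lemma cutoff_of_support f h chi :
  cutoff f chi -> (forall x, h x <> 0 -> f x <> 0) -> cutoff h chi.
Proof.
  intros [Dchi [Hone Hrange]] Hsupp.
  split; [| split]; [exact Dchi | intros x Hx; apply Hone, Hsupp, Hx | exact Hrange].
Qed.

Lemma cutoff_max f g h chi psi : cutoff f chi -> cutoff g psi ->
  (forall x, h x <> 0 -> f x <> 0 \/ g x <> 0) -> cutoff h (fmax chi psi).
Proof.
  intros [Dchi [Hchi Rchi]] [Dpsi [Hpsi Rpsi]] Hsupp. unfold fmax.
  split; [apply D_max; assumption | split].
  - intros x Hx. specialize (Rchi x). specialize (Rpsi x).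
    destruct (Hsupp x Hx) as [Hf | Hg]; [rewrite (Hchi x Hf) | rewrite (Hpsi x Hg)];
      destruct_minmax; lra.
  - intros x. specialize (Rchi x). specialize (Rpsi x). destruct_minmax; lra.
Qed.

Lemma support_add (f g : X -> R) x : fadd f g x <> 0 -> f x <> 0 \/ g x <> 0.
Proof. unfold fadd. intros Hx. destruct (Req_dec (f x) 0); [right | left]; lra. Qed.

Lemma Eset_iff_cutoff f chi : (forall x, 0 <= f x) -> Eset D f chi <-> cutoff f chi.
Proof.
  intros Hf. split.
  - intros Hchi. pose proof Hchi as [Dchi [_ [Hle1 Hge0]]]. repeat split; auto.
    intros x Hx. apply (Eset_eq_one f chi x Hchi). specialize (Hf x). lra.
  - intros [Dchi [Hone Hrange]]. repeat split; auto; intros x; try apply Hrange.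
    intros Hx. rewrite Hone; lra.
Qed.

Lemma D0plus_iff f :
  D0plus D f <-> D f /\ (forall x, 0 <= f x) /\ exists chi, cutoff f chi.
Proof.
  split; intros [Df [Hf [chi Hchi]]]; repeat split; auto;
    exists chi; apply Eset_iff_cutoff; assumption.
Qed.

Lemma D0plus_of_support f h : D h -> (forall x, 0 <= h x) ->
  (forall x, h x <> 0 -> f x <> 0) -> (exists chi, cutoff f chi) -> D0plus D h.
Proof.
  intros Dh Hh Hsupp [chi Hchi]. apply D0plus_iff.
  repeat split; auto. exists chi. apply (cutoff_of_support f); assumption.
Qed.

Lemma D0_iff h : D0 D h <-> D h /\ exists chi, cutoff h chi.
Proof.
  split.
  - intros Hh. induction Hh as [| f Hf | f g _ [Df [chi Hchi]] _ [Dg [psi Hpsi]]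
                              | a f _ [Df [chi Hchi]]].
    + split; [exact D_zero |]. exists fzero.
      split; [exact D_zero | split]; intros x; unfold fzero; [| lra].
      intros Hx. exfalso. apply Hx. reflexivity.
    + apply D0plus_iff in Hf. tauto.
    + split; [apply D_add; assumption |].
      exists (fmax chi psi). apply (cutoff_max f g); auto using support_add.
    + split; [apply D_scal; assumption |]. exists chi.
      apply (cutoff_of_support f); auto. intros x Hx Hz. apply Hx. unfold fscal. rewrite Hz. ring.
  - intros [Dh Hcov].
    replace h with (fadd (fpos h) (fscal (-1) (fneg h)))
      by (extensionality x; unfold fadd, fscal, fpos, fneg; destruct_minmax; lra).
    apply span_add; [| apply span_scal]; apply span_gen;
      apply (D0plus_of_support h); auto using D_pos, D_neg;
      intros x; unfold fpos, fneg; try intros Hx Hz; try apply Hx; try rewrite Hz;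
      destruct_minmax; lra.
Qed.

Lemma D0_D h : D0 D h -> D h.
Proof. intros Hh. apply D0_iff in Hh. tauto. Qed.

Lemma D0_add f g : D0 D f -> D0 D g -> D0 D (fadd f g).
Proof. apply span_add. Qed.

Lemma D0_scal a f : D0 D f -> D0 D (fscal a f).
Proof. apply span_scal. Qed.

Lemma D0_of_support f h : D0 D f -> D h -> (forall x, h x <> 0 -> f x <> 0) -> D0 D h.
Proof.
  intros Hf Dh Hsupp. apply D0_iff in Hf as [_ [chi Hchi]].
  apply D0_iff. split; [exact Dh |]. exists chi. apply (cutoff_of_support f); assumption.
Qed.

Lemma D0_mul f h : D0 D f -> D h -> D0 D (fmul f h).
Proof.
  intros Hf Dh. apply (D0_of_support f); auto using D_mul, D0_D.
  intros x Hx Hz. apply Hx. unfold fmul. rewrite Hz. ring.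
Qed.

Lemma D0plus_pos h : D0 D h -> D0plus D (fpos h).
Proof.
  intros Hh. apply D0_iff in Hh as [Dh Hcov]. apply (D0plus_of_support h); auto using D_pos;
    intros x; unfold fpos; try intros Hx Hz; try apply Hx; try rewrite Hz; destruct_minmax; lra.
Qed.

Lemma D0plus_neg h : D0 D h -> D0plus D (fneg h).
Proof.
  intros Hh. apply D0_iff in Hh as [Dh Hcov]. apply (D0plus_of_support h); auto using D_neg;
    intros x; unfold fneg; try intros Hx Hz; try apply Hx; try rewrite Hz; destruct_minmax; lra.
Qed.

Lemma Eset_fzero : Eset D fzero fzero.
Proof. split; [exact D_zero |]. unfold fzero. repeat split; intros; lra. Qed.

Lemma Eset_of_support f g chi : Eset D f chi -> (forall x, 0 < g x -> 0 < f x) -> Eset D g chi.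
Proof. intros [Dchi [Hone Hrest]] Hsupp. split; [exact Dchi | split; auto]. Qed.

Lemma Eset_add f g chi : Eset D f chi -> Eset D g chi -> Eset D (fadd f g) chi.
Proof.
  intros [Dchi [Hf Hrest]] [_ [Hg _]]. split; [exact Dchi | split; [| exact Hrest]].
  intros x Hx. unfold fadd in Hx. destruct (Rlt_dec 0 (f x)); [apply Hf | apply Hg]; lra.
Qed.

Lemma Eset_max f g phi psi : Eset D f phi -> Eset D g psi ->
  Eset D f (fmax phi psi) /\ Eset D g (fmax phi psi).
Proof.
  intros [Dphi [H1 [H2 H3]]] [Dpsi [K1 [K2 K3]]]. unfold fmax.
  split; (split; [apply D_max; assumption |]); repeat split; intros x;
    try intros Hx; try specialize (H1 x Hx); try specialize (K1 x Hx);
    specialize (H2 x); specialize (H3 x); specialize (K2 x); specialize (K3 x);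
    destruct_minmax; lra.
Qed.

Lemma Eset_scal c f phi : 0 < c -> Eset D (fscal c f) phi <-> Eset D f phi.
Proof.
  intros Hc. unfold Eset, fscal.
  split; intros [Dphi [Hone Hrest]]; (split; [exact Dphi | split; [| exact Hrest]]);
    intros x Hx; apply Hone; nra.
Qed.

Lemma D0plus_zero : D0plus D fzero.
Proof.
  split; [exact D_zero | split; [unfold fzero; intros; lra |]]. exists fzero. exact Eset_fzero.
Qed.

Lemma D0plus_add f g : D0plus D f -> D0plus D g -> D0plus D (fadd f g).
Proof.
  intros Hf Hg. apply D0plus_iff in Hf as [Df [Pf [chi Hchi]]].
  apply D0plus_iff in Hg as [Dg [Pg [psi Hpsi]]].
  apply D0plus_iff. split; [apply D_add; assumption | split].
  - intros x. unfold fadd. specialize (Pf x). specialize (Pg x). lra.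
  - exists (fmax chi psi). apply (cutoff_max f g); auto using support_add.
Qed.

Lemma D0plus_scal c f : 0 < c -> D0plus D f -> D0plus D (fscal c f).
Proof.
  intros Hc Hf. pose proof Hf as [Df [Pf [phi Hphi]]].
  split; [apply D_scal; assumption | split].
  - intros x. unfold fscal. specialize (Pf x). nra.
  - exists phi. apply Eset_scal; assumption.
Qed.

Lemma killing_plus_is_glb f : D0plus D f ->
  is_glb (fun r => exists phi, Eset D f phi /\ r = E f phi) (killing_plus D E f).
Proof.
  intros [Df [Hf [phi Hphi]]]. apply is_glb_Rinf.
  - exists (E f phi). eauto.
  - exists 0. intros r [psi [Hpsi ->]]. apply E_nonneg_on_Eset; assumption.
Qed.

Lemma killing_plus_le f phi : D0plus D f -> Eset D f phi -> killing_plus D E f <= E f phi.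
Proof. intros Hf Hphi. apply (killing_plus_is_glb f Hf). eauto. Qed.

Lemma killing_plus_nonneg f : D0plus D f -> 0 <= killing_plus D E f.
Proof.
  intros Hf. apply (killing_plus_is_glb f Hf). intros r [phi [Hphi ->]].
  destruct Hf as [Df [Pf _]]. apply E_nonneg_on_Eset; assumption.
Qed.

Lemma killing_plus_approx f e : D0plus D f -> 0 < e ->
  exists phi, Eset D f phi /\ E f phi <= killing_plus D E f + e.
Proof.
  intros Hf He. destruct (is_glb_approx _ _ e (killing_plus_is_glb f Hf) He)
    as [r [[phi [Hphi ->]] Hr]].
  eauto.
Qed.

Lemma killing_plus_zero : killing_plus D E fzero = 0.
Proof.
  apply Rle_antisym; [| exact (killing_plus_nonneg _ D0plus_zero)].
  rewrite <- (E_zero fzero D_zero). exact (killing_plus_le _ _ D0plus_zero Eset_fzero).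
Qed.

(* Near-optimal [phi] for [f] and [psi] for [g] combine into [phi \/ psi] for [f + g]. *)
Lemma killing_plus_add f g : D0plus D f -> D0plus D g ->
  killing_plus D E (fadd f g) = killing_plus D E f + killing_plus D E g.
Proof.
  intros Hf Hg. pose proof Hf as [Df [Pf _]]. pose proof Hg as [Dg [Pg _]].
  apply Rinf_eq, is_glb_of_approx.
  - intros r [chi [Hchi ->]]. pose proof Hchi as [Dchi _]. rewrite E_add by assumption.
    apply Rplus_le_compat; apply killing_plus_le; auto; apply (Eset_of_support _ _ _ Hchi);
      intros x Hx; unfold fadd; [specialize (Pg x) | specialize (Pf x)]; lra.
  - intros e He.
    destruct (killing_plus_approx f (e / 2) Hf) as [phi [Hphi Ephi]]; [lra |].
    destruct (killing_plus_approx g (e / 2) Hg) as [psi [Hpsi Epsi]]; [lra |].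
    destruct (Eset_max f g phi psi Hphi Hpsi) as [Hmf Hmg]. pose proof Hmf as [Dm _].
    exists (E (fadd f g) (fmax phi psi)). split; [eauto using Eset_add |].
    assert (E f (fmax phi psi) <= E f phi)
      by (apply E_antitone_on_Eset; auto; intros x; unfold fmax; destruct_minmax; lra).
    assert (E g (fmax phi psi) <= E g psi)
      by (apply E_antitone_on_Eset; auto; intros x; unfold fmax; destruct_minmax; lra).
    rewrite E_add by assumption. lra.
Qed.

Lemma killing_plus_scal c f : 0 < c -> D0plus D f ->
  killing_plus D E (fscal c f) = c * killing_plus D E f.
Proof.
  intros Hc Hf. pose proof Hf as [Df _].
  apply Rinf_eq, is_glb_of_approx.
  - intros r [phi [Hphi ->]]. apply Eset_scal in Hphi; [| exact Hc]. pose proof Hphi as [Dphi _].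
    rewrite E_scal by assumption.
    apply Rmult_le_compat_l; [lra | apply killing_plus_le; assumption].
  - intros e He. destruct (killing_plus_approx f (e / c) Hf) as [phi [Hphi Ephi]];
      [apply Rdiv_lt_0_compat; assumption |].
    pose proof Hphi as [Dphi _].
    exists (c * E f phi). split.
    + exists phi. split; [apply Eset_scal; assumption | symmetry; apply E_scal; assumption].
    + apply (Rmult_le_compat_l c) in Ephi; [| lra].
      assert (c * (e / c) = e) by (field; lra). lra.
Qed.

Lemma killing_sub a b : D0plus D a -> D0plus D b ->
  killing D E (fun x => a x - b x) = killing_plus D E a - killing_plus D E b.
Proof.
  intros Ha Hb. set (h := fun x => a x - b x).
  assert (Hh : D0 D h).
  { replace h with (fadd a (fscal (-1) b)) by (extensionality x; unfold h, fadd, fscal; ring).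
    apply span_add; [| apply span_scal]; apply span_gen; assumption. }
  assert (Heq : fadd (fpos h) b = fadd (fneg h) a)
    by (extensionality x; unfold fadd, fpos, fneg, h; destruct_minmax; lra).
  pose proof (killing_plus_add _ _ (D0plus_pos h Hh) Hb) as Hpos.
  pose proof (killing_plus_add _ _ (D0plus_neg h Hh) Ha) as Hneg.
  rewrite Heq in Hpos. unfold killing. lra.
Qed.

Lemma killing_of_D0plus a : D0plus D a -> killing D E a = killing_plus D E a.
Proof.
  intros Ha. pose proof (killing_sub a fzero Ha D0plus_zero) as H.
  rewrite killing_plus_zero, Rminus_0_r in H.
  replace (fun x => a x - fzero x) with a in H by (extensionality x; unfold fzero; ring).
  exact H.
Qed.

Lemma killing_add h1 h2 : D0 D h1 -> D0 D h2 ->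
  killing D E (fadd h1 h2) = killing D E h1 + killing D E h2.
Proof.
  intros H1 H2.
  replace (fadd h1 h2) with
    (fun x => fadd (fpos h1) (fpos h2) x - fadd (fneg h1) (fneg h2) x)
    by (extensionality x; unfold fadd, fpos, fneg; destruct_minmax; lra).
  rewrite killing_sub by auto using D0plus_add, D0plus_pos, D0plus_neg.
  rewrite !killing_plus_add by auto using D0plus_pos, D0plus_neg.
  unfold killing. ring.
Qed.

Lemma killing_scal c h : D0 D h -> killing D E (fscal c h) = c * killing D E h.
Proof.
  intros Hh. pose proof (D0plus_pos h Hh) as Hpos. pose proof (D0plus_neg h Hh) as Hneg.
  destruct (Rtotal_order c 0) as [Hc | [Hc | Hc]].
  - replace (fscal c h) with (fun x => fscal (- c) (fneg h) x - fscal (- c) (fpos h) x)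
      by (extensionality x; unfold fscal, fpos, fneg; destruct_minmax; nra).
    rewrite killing_sub, !killing_plus_scal by (try apply D0plus_scal; auto; lra).
    unfold killing. ring.
  - subst c. replace (fscal 0 h) with (fun x => @fzero X x - fzero x)
      by (extensionality x; unfold fscal, fzero; ring).
    rewrite killing_sub by exact D0plus_zero. ring.
  - replace (fscal c h) with (fun x => fscal c (fpos h) x - fscal c (fneg h) x)
      by (extensionality x; unfold fscal, fpos, fneg; destruct_minmax; nra).
    rewrite killing_sub, !killing_plus_scal by (try apply D0plus_scal; auto; lra).
    unfold killing. ring.
Qed.

Lemma killing_lin a f b g : D0 D f -> D0 D g ->
  killing D E (fun x => a * f x + b * g x) = a * killing D E f + b * killing D E g.
Proof.
  intros Hf Hg. change (fun x => a * f x + b * g x) with (fadd (fscal a f) (fscal b g)).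
  rewrite killing_add, !killing_scal by auto using D0_scal. reflexivity.
Qed.

Lemma E_sq_le_of_bounded g chi d : D g -> (forall x, 0 <= g x <= d) -> cutoff g chi ->
  E (fmul g g) chi <= d * E g chi.
Proof.
  intros Dg Hg Hchi. pose proof Hchi as [Dchi _].
  assert (Hgchi : Eset D g chi) by (apply Eset_iff_cutoff; [intros x; apply Hg | exact Hchi]).
  assert (Hnn : 0 <= E (fun x => d * g x + (-1) * fmul g g x) chi).
  { apply E_nonneg_on_Eset; [apply D_lin; auto using D_mul | |].
    - intros x. unfold fmul. specialize (Hg x). nra.
    - apply (Eset_of_support g _ _ Hgchi). intros x Hx. unfold fmul in Hx.
      specialize (Hg x). nra. }
  rewrite E_lin in Hnn by auto using D_mul. lra.
Qed.

(* With [g = u /\ d] and [h = u - g], [g / d] lies in [E_h] below [chi]. *)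
Lemma E_slice_cross u chi d : D u -> (forall x, 0 <= u x) -> cutoff u chi -> 0 < d ->
  d * E (fun x => u x - Rmin (u x) d) chi
  <= E (fun x => Rmin (u x) d) (fun x => u x - Rmin (u x) d).
Proof.
  intros Du Hu Hchi Hd. pose proof Hchi as [Dchi [Hone Hrange]].
  set (g := fun x => Rmin (u x) d). set (h := fun x => u x - g x).
  change (d * E h chi <= E g h).
  assert (Dg : D g) by (apply D_min_const; assumption).
  assert (Dh : D h) by (apply D_sub; assumption).
  assert (Hh : forall x, 0 <= h x) by (intros x; unfold h, g; destruct_minmax; lra).
  set (phi := fscal (/ d) g).
  assert (Dphi : D phi) by (apply D_scal; exact Dg).
  assert (Hphi : Eset D h phi).
  { split; [exact Dphi |]. unfold phi, fscal, h, g.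
    repeat split; intros x; try intros Hx; specialize (Hu x);
      [| apply (Rmult_le_reg_l d); [lra | rewrite <- Rmult_assoc, Rinv_r by lra]
       | apply Rmult_le_pos; [left; apply Rinv_0_lt_compat; lra |]];
      destruct_minmax; try lra.
    rewrite Rinv_l; lra. }
  assert (Hchi_h : Eset D h chi).
  { apply (Eset_iff_cutoff h chi Hh), (cutoff_of_support u); [exact Hchi |].
    intros x Hx Hz. apply Hx. unfold h, g. rewrite Hz. destruct_minmax; lra. }
  replace g with (fscal d phi) at 1 by (extensionality x; unfold phi, fscal; field; lra).
  rewrite E_scal, (E_sym phi h) by assumption.
  apply Rmult_le_compat_l; [lra |]. apply E_antitone_on_Eset; auto.
  intros x. destruct (Req_dec (u x) 0) as [Hz | Hz].
  - unfold phi, fscal, g. rewrite Hz. specialize (Hrange x). destruct_minmax; nra.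
  - rewrite (Hone x Hz). apply Hphi.
Qed.

(* Peel off the bottom slice [u /\ d] and induct on the number of slices of height [d]. *)
Lemma E_sq_cutoff_slices d chi n : 0 < d -> forall u, D u ->
  (forall x, 0 <= u x <= INR n * d) -> cutoff u chi ->
  E (fmul u u) chi <= E u u + d * E u chi.
Proof.
  intros Hd. induction n as [| n IH]; intros u Du Hu Hchi; pose proof Hchi as [Dchi _].
  - replace u with (@fzero X)
      by (extensionality x; specialize (Hu x); simpl in Hu; unfold fzero; lra).
    replace (fmul fzero fzero) with (@fzero X) by (extensionality x; unfold fmul, fzero; ring).
    rewrite !E_zero by auto using D_zero. lra.
  - set (g := fun x => Rmin (u x) d). set (h := fun x => u x - g x).
    assert (Dg : D g) by (apply D_min_const; assumption).
    assert (Dh : D h) by (apply D_sub; assumption).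
    assert (Hsupp : forall k : X -> R, (forall x, u x = 0 -> k x = 0) -> cutoff k chi)
      by (intros k Hk; apply (cutoff_of_support u); auto).
    assert (IHh : E (fmul h h) chi <= E h h + d * E h chi).
    { apply IH; [exact Dh | |].
      - intros x. specialize (Hu x). rewrite S_INR in Hu. pose proof (pos_INR n).
        unfold h, g. destruct_minmax; nra.
      - apply Hsupp. intros x Hz. unfold h, g. rewrite Hz. destruct_minmax; lra. }
    assert (Hgg : E (fmul g g) chi <= d * E g chi).
    { apply E_sq_le_of_bounded; [exact Dg | |].
      - intros x. specialize (Hu x). unfold g. destruct_minmax; lra.
      - apply Hsupp. intros x Hz. unfold g. rewrite Hz. destruct_minmax; lra. }
    assert (Hcross : d * E h chi <= E g h)
      by (apply E_slice_cross; auto; intros x; apply Hu).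
    assert (Hu_gh : u = fadd g h) by (extensionality x; unfold fadd, h; ring).
    assert (Huu : fmul u u = fadd (fmul g g) (fadd (fscal (2 * d) h) (fmul h h)))
      by (extensionality x; unfold fmul, fadd, fscal, h, g; destruct_minmax; nra).
    rewrite Huu, Hu_gh.
    rewrite !E_add, !E_add_r, E_scal, (E_sym h g); auto using D_add, D_scal, D_mul.
    pose proof (E_nonneg g Dg). lra.
Qed.

Lemma E_sq_cutoff_nonneg u chi : D u -> (forall x, 0 <= u x) -> cutoff u chi ->
  E (fmul u u) chi <= E u u.
Proof.
  intros Du Hu Hchi. pose proof Hchi as [Dchi _].
  assert (Hpos : 0 <= E u chi)
    by (apply E_nonneg_on_Eset; auto; apply Eset_iff_cutoff; assumption).
  destruct (D_bounded u Du) as [M HM].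
  apply Rle_plus_epsilon. intros e He.
  set (d := e / (E u chi + 1)).
  assert (Hd : 0 < d) by (unfold d; apply Rdiv_lt_0_compat; lra).
  assert (Hde : d * E u chi <= e).
  { unfold d. apply (Rmult_le_reg_l (E u chi + 1)); [lra |].
    replace ((E u chi + 1) * (e / (E u chi + 1) * E u chi)) with (e * E u chi) by (field; lra).
    nra. }
  destruct (INR_archimed d M Hd) as [n Hn].
  pose proof (E_sq_cutoff_slices d chi n Hd u Du) as Hslices.
  enough (E (fmul u u) chi <= E u u + d * E u chi) by lra.
  apply Hslices; [| exact Hchi].
  intros x. specialize (HM x). specialize (Hu x). rewrite Rabs_right in HM by lra. lra.
Qed.

Lemma E_sq_cutoff f chi : D f -> cutoff f chi -> E (fmul f f) chi <= E f f.
Proof.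
  intros Df Hchi. pose proof Hchi as [Dchi _].
  set (p := fpos f). set (n := fneg f).
  assert (Dp : D p) by (apply D_pos; exact Df).
  assert (Dn : D n) by (apply D_neg; exact Df).
  assert (Hf : f = fun x => 1 * p x + (-1) * n x)
    by (extensionality x; unfold p, n, fpos, fneg; destruct_minmax; lra).
  assert (Hff : fmul f f = fadd (fmul p p) (fmul n n))
    by (extensionality x; unfold fmul, fadd, p, n, fpos, fneg; destruct_minmax; nra).
  assert (Hpn : E p n <= 0)
    by (apply E_disjoint_nonpos; auto; intros x; unfold p, n, fpos, fneg; destruct_minmax; lra).
  assert (Hsupp : forall k : X -> R, (forall x, f x = 0 -> k x = 0) -> cutoff k chi)
    by (intros k Hk; apply (cutoff_of_support f); auto).
  assert (Hp : E (fmul p p) chi <= E p p).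
  { apply E_sq_cutoff_nonneg; auto; [| apply Hsupp];
      intros x; unfold p, fpos; try intros Hz; try rewrite Hz; destruct_minmax; lra. }
  assert (Hn : E (fmul n n) chi <= E n n).
  { apply E_sq_cutoff_nonneg; auto; [| apply Hsupp];
      intros x; unfold n, fneg; try intros Hz; try rewrite Hz; destruct_minmax; lra. }
  rewrite Hff, E_add by auto using D_mul.
  rewrite Hf, E_quad by assumption. lra.
Qed.

Lemma killing_sq_le f : D0 D f -> killing D E (fmul f f) <= E f f.
Proof.
  intros Hf. apply D0_iff in Hf as [Df [chi Hchi]].
  assert (Hsupp : forall x, fmul f f x <> 0 -> f x <> 0)
    by (intros x Hx Hz; apply Hx; unfold fmul; rewrite Hz; ring).
  assert (Hff : D0plus D (fmul f f)).
  { apply (D0plus_of_support f); eauto using D_mul. intros x. unfold fmul. nra. }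
  assert (Hchi_ff : Eset D (fmul f f) chi).
  { apply Eset_iff_cutoff; [intros x; unfold fmul; nra |].
    apply (cutoff_of_support f); assumption. }
  rewrite killing_of_D0plus by exact Hff.
  eapply Rle_trans; [apply killing_plus_le; eassumption |].
  apply E_sq_cutoff; assumption.
Qed.

Definition Qform (f g : X -> R) : R := E f g - killing D E (fmul f g).

Lemma Q_bilinear : bilinear_form (D0 D) Qform.
Proof.
  split; [| split; [| split]].
  - split; [apply span_zero | split; [apply span_add | apply span_scal]].
  - intros f g Hf Hg. unfold Qform. rewrite E_sym by auto using D0_D.
    replace (fmul f g) with (fmul g f) by (extensionality x; unfold fmul; ring). reflexivity.
  - intros a b f g h Hf Hg Hh. unfold Qform.
    change (fadd (fscal a f) (fscal b g)) with (fun x => a * f x + b * g x).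
    rewrite E_lin by auto using D0_D.
    replace (fmul (fun x => a * f x + b * g x) h) with (fun x => a * fmul f h x + b * fmul g h x)
      by (extensionality x; unfold fmul; ring).
    rewrite killing_lin by auto using D0_mul, D0_D. ring.
  - intros f Hf. unfold Qform. pose proof (killing_sq_le f Hf). lra.
Qed.

(* Write [f = u + v - w] with [u = T_1 f], [v = (f - 1)^+], [w = f^-], so that
   [f^2 = u^2 + v^2 + w^2 + 2 v]; the cross terms with [w] are nonpositive by disjointness,
   and [K v <= E(u, v)] because [u] belongs to [E_v]. *)
Lemma Q_unit_contraction : unit_contraction_operates (D0 D) Qform.
Proof.
  intros f Hf. pose proof (D0_D f Hf) as Df.
  set (u := fT1 f). set (v := fun x => Rmax (f x - 1) 0). set (w := fneg f).
  assert (Du : D u) by (apply D_T1; exact Df).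
  assert (Dv : D v).
  { replace v with (fun x => fpos f x - u x)
      by (extensionality x; unfold fpos, u, v, fT1; destruct_minmax; lra).
    apply D_sub; auto using D_pos. }
  assert (Dw : D w) by (apply D_neg; exact Df).
  assert (Hsupp : forall k, D k -> (forall x, f x = 0 -> k x = 0) -> D0 D k)
    by (intros k Dk Hk; apply (D0_of_support f); auto).
  assert (D0u : D0 D u)
    by (apply Hsupp; auto; intros x Hz; unfold u, fT1; rewrite Hz; destruct_minmax; lra).
  assert (D0v : D0 D v)
    by (apply Hsupp; auto; intros x Hz; unfold v; rewrite Hz; destruct_minmax; lra).
  assert (D0w : D0 D w)
    by (apply Hsupp; auto; intros x Hz; unfold w, fneg; rewrite Hz; destruct_minmax; lra).
  split; [exact D0u | unfold Qform].
  set (s := fun x => 1 * u x + 1 * v x).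
  assert (Hf_split : f = fun x => 1 * s x + (-1) * w x)
    by (extensionality x; unfold s, u, v, w, fT1, fneg; destruct_minmax; lra).
  assert (Hff_split : fmul f f = fadd (fadd (fmul u u) (fmul v v)) (fadd (fmul w w) (fscal 2 v)))
    by (extensionality x; unfold fmul, fadd, fscal, u, v, w, fT1, fneg; destruct_minmax; nra).
  assert (Hv : killing D E v <= E u v).
  { assert (Pv : D0plus D v).
    { apply D0plus_iff. apply D0_iff in D0v as [_ Hcov].
      repeat split; auto. intros x. unfold v. destruct_minmax; lra. }
    rewrite killing_of_D0plus, (E_sym u v) by assumption. apply killing_plus_le; [exact Pv |].
    repeat split; auto; intros x; unfold u, v, fT1; try intros Hx; destruct_minmax; lra. }
  assert (Huw : E u w <= 0)
    by (apply E_disjoint_nonpos; auto; intros x; unfold u, w, fT1, fneg; destruct_minmax; lra).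
  assert (Hvw : E v w <= 0)
    by (apply E_disjoint_nonpos; auto; intros x; unfold v, w, fneg; destruct_minmax; lra).
  pose proof (killing_sq_le v D0v) as Hvv. pose proof (killing_sq_le w D0w) as Hww.
  rewrite Hff_split, !killing_add, killing_scal by auto using D0_add, D0_scal, D0_mul.
  rewrite Hf_split at 1 2. unfold s. rewrite E_quad, E_quad, E_lin by auto using D_lin. lra.
Qed.

Lemma fmul_Eset g psi : (forall x, 0 <= g x) -> Eset D g psi -> fmul g psi = g.
Proof.
  intros Hg Hpsi. extensionality x. unfold fmul. destruct (Rlt_dec 0 (g x)) as [Hpos | Hzero].
  - rewrite (Eset_eq_one g psi x Hpsi Hpos). ring.
  - replace (g x) with 0 by (specialize (Hg x); lra). ring.
Qed.

Lemma Qform_Eset g psi : D0plus D g -> Eset D g psi ->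
  Qform g psi = E g psi - killing_plus D E g.
Proof.
  intros Hg Hpsi. pose proof Hg as [_ [Pg _]]. unfold Qform.
  rewrite fmul_Eset, killing_of_D0plus by assumption. reflexivity.
Qed.

(* [psi = (phi - phi /\ eps) / (1 - eps)] is supported in [{phi > eps}], where
   [(phi / eps) /\ 1] is a cutoff. *)
Lemma Eset_D0_renormalize g phi eps : D0plus D g -> Eset D g phi -> 0 < eps < 1 ->
  exists psi, Eset (D0 D) g psi /\ (1 - eps) * E g psi <= E g phi.
Proof.
  intros Hg Hphi Heps. pose proof Hg as [Dg [Pg _]]. pose proof Hphi as [Dphi [_ [Hle1 Hge0]]].
  set (chi := fmin (fscal (/ eps) phi) fone).
  assert (Hinv : 1 < / eps) by (rewrite <- Rinv_1; apply Rinv_lt_contravar; lra).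
  assert (Dchi : D chi) by (apply D_min1, D_scal; exact Dphi).
  assert (Hchi : Eset D g chi).
  { split; [exact Dchi |]. unfold chi, fmin, fscal, fone.
    repeat split; intros x; try intros Hx;
      [rewrite (Eset_eq_one g phi x Hphi Hx) | | assert (0 <= / eps * phi x)
         by (apply Rmult_le_pos; [lra | apply Hge0])]; destruct_minmax; lra. }
  set (m := fun x => Rmin (phi x) eps).
  assert (Hm : m = fscal eps chi).
  { extensionality x. unfold m, chi, fmin, fscal, fone.
    replace (phi x) with (eps * (/ eps * phi x)) at 1 by (field; lra).
    generalize (/ eps * phi x) as y. intros y. destruct_minmax; nra. }
  assert (Dm : D m) by (apply D_min_const; [exact Dphi | lra]).
  set (psi := fscal (/ (1 - eps)) (fun x => 1 * phi x + (-1) * m x)).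
  assert (Dpsi : D psi) by (apply D_scal, D_lin; assumption).
  exists psi. split.
  - pose proof Hchi as [_ [_ [Hchi1 Hchi0]]].
    assert (Ha : 0 < / (1 - eps)) by (apply Rinv_0_lt_compat; lra).
    assert (Ha1 : (1 - eps) * / (1 - eps) = 1) by (field; lra).
    split; [apply D0_iff; split; [exact Dpsi | exists chi] |].
    + split; [exact Dchi | split; [| intros x; split; [apply Hchi0 | apply Hchi1]]].
      intros x Hx. assert (Hbig : eps < phi x).
      { destruct (Rlt_dec eps (phi x)) as [Hlt | Hle]; [exact Hlt |].
        exfalso. apply Hx. unfold psi, fscal, m. destruct_minmax; nra. }
      assert (1 < / eps * phi x).
      { apply (Rmult_lt_reg_l eps); [lra |]. rewrite <- Rmult_assoc, Rinv_r by lra. lra. }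
      unfold chi, fmin, fscal, fone. destruct_minmax; lra.
    + unfold psi, fscal, m. split; [| split]; intros x; [intros Hx | |];
        [rewrite (Eset_eq_one g phi x Hphi Hx) | specialize (Hle1 x) | specialize (Hge0 x)];
        destruct_minmax; nra.
  - assert (HEchi : 0 <= E g chi) by (apply E_nonneg_on_Eset; assumption).
    unfold psi. rewrite E_scal_r, E_lin_r, Hm, E_scal_r by auto using D_lin, D_scal.
    rewrite <- Rmult_assoc, Rinv_r, Rmult_1_l by lra. nra.
Qed.

Lemma Q_killing_plus_zero g : D0plus D g -> killing_plus (D0 D) Qform g = 0.
Proof.
  intros Hg. set (K0 := killing_plus D E g).
  assert (HK0 : 0 <= K0) by (apply killing_plus_nonneg; exact Hg).
  apply Rinf_eq, is_glb_of_approx.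
  - intros r [psi [Hpsi ->]]. pose proof Hpsi as [D0psi Hrest].
    assert (Hpsi' : Eset D g psi) by (split; [apply D0_D |]; assumption).
    rewrite Qform_Eset by assumption. pose proof (killing_plus_le g psi Hg Hpsi') as HK. lra.
  - intros e He.
    set (eps := e / (e + K0 + 1)).
    assert (Heps : 0 < eps < 1).
    { unfold eps. split; [apply Rdiv_lt_0_compat; lra |].
      apply (Rmult_lt_reg_l (e + K0 + 1)); [lra |]. field_simplify; lra. }
    destruct (killing_plus_approx g eps Hg) as [phi [Hphi Ephi]]; [lra |].
    destruct (Eset_D0_renormalize g phi eps Hg Hphi Heps) as [psi [Hpsi Epsi]].
    pose proof Hpsi as [D0psi Hrest].
    assert (Hpsi' : Eset D g psi) by (split; [apply D0_D |]; assumption).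
    exists (Qform g psi). split; [eauto |].
    rewrite Qform_Eset by assumption. fold K0 in Ephi |- *.
    (* [eps] is chosen so that [(1 - eps) (K0 + e) = K0 + eps]. *)
    assert (Hchoice : (1 - eps) * (K0 + e) = K0 + eps) by (unfold eps; field; lra).
    assert (E g psi <= K0 + e) by (apply (Rmult_le_reg_l (1 - eps)); lra).
    lra.
Qed.

Lemma Q_zero_killing : zero_killing (D0 D) Qform.
Proof.
  intros f Hf.
  assert (D0f : D0 D f).
  { induction Hf as [| f [Hf _] | | ]; auto using D0_add, D0_scal. apply span_zero. }
  unfold killing.
  rewrite !Q_killing_plus_zero by auto using D0plus_pos, D0plus_neg. ring.
Qed.

End KillingFunctional.

Theorem propositionP (X : Type) (D : (X -> R) -> Prop) (E : (X -> R) -> (X -> R) -> R)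
  (hD : stone_algebra_lattice D) (hE : bilinear_form D E)
  (hT : unit_contraction_operates D E) :
  let K := killing D E in
  let Q := fun f g => E f g - K (fmul f g) in
  (forall f, D0 D f -> K (fmul f f) <= E f f) /\
  bilinear_form (D0 D) Q /\
  unit_contraction_operates (D0 D) Q /\
  zero_killing (D0 D) Q.
Proof.
  intros K Q.
  split; [| split; [| split]].
  - exact (killing_sq_le D E hD hE hT).
  - exact (Q_bilinear D E hD hE hT).
  - exact (Q_unit_contraction D E hD hE hT).
  - exact (Q_zero_killing D E hD hE hT).
Qed.
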